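(* If $G$ is a $k$-gate, then $G\in$ Helly $[k,2,2]$. Furthermore, $G$ admits a Helly $(k,2,2)$-representation on a host tree that is a star.
   Context: All graphs are finite and simple. An $EPT$ representation of a graph $G$ is a pair $\langle \mathcal{P},T\rangle$ where $T$ is a tree and $\mathcal{P}=(P_v)_{v\in V(G)}$ is a family of subpaths of $T$ such that two distinct vertices $v,w$ are adjacent if and only if $E(P_v)\cap E(P_w)\neq\emptyset$. If $T$ has maximum degree $h$ this is an $(h,2,2)$-representation. It is Helly if $(E(P))_{P\in\mathcal{P}}$ has the Helly property (every pairwise intersecting subfamily has nonempty total intersection); Helly $[h,2,2]$ is the class of graphs admitting a Helly $(h,2,2)$-representation. A clique is a maximal complete set. Gates are defined recursively: (i) every chordless cycle $C_n$ with $n\geq 4$ is a gate; (ii) if $H$ is a gate, $C$ and $C'$ are disjoint cliques of $H$, and $P=(v_1,\dots,v_l)$ with $l\geq 2$ is a chordless path vertex-disjoint from $H$, then the union of $H$ and $P$ together with all edges between $v_1$ and the vertices of $C$ and all edges between $v_l$ and the vertices of $C'$ is a gate; (iii) there are no other gates. A $k$-gate is a gate with exactly $k$ cliques. A star is a graph $K_{1,n}$. *)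

(* Graphs have vertex labels in nat: a graph is a pair
   (V, E) with V : {fset nat} the (finite) vertex set and E : rel nat whose
   values only matter on V x V.  Host trees live on a finType. *)
From mathcomp Require Import all_boot all_order.
From mathcomp Require Import finmap.
Set Implicit Arguments. Unset Strict Implicit. Unset Printing Implicit Defensive.
Local Open Scope fset_scope.

Definition complete_set (V : {fset nat}) (E : rel nat) (C : {fset nat}) : Prop :=
  (forall x, x \in C -> x \in V) /\
  (forall x y, x \in C -> y \in C -> x != y -> E x y).

Definition is_clique (V : {fset nat}) (E : rel nat) (C : {fset nat}) : Prop :=
  complete_set V E C /\
  (forall D : {fset nat}, complete_set V E D ->
     (forall x, x \in C -> x \in D) -> D = C).

Definition num_cliques_eq (V : {fset nat}) (E : rel nat) (k : nat) : Prop :=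
  exists cs : seq {fset nat},
    uniq cs /\ size cs = k /\ (forall C, is_clique V E C <-> C \in cs).

Definition consec (s : seq nat) (x y : nat) : bool :=
  ((x, y) \in zip s (behead s)) || ((y, x) \in zip s (behead s)).

Definition cconsec (s : seq nat) (x y : nat) : bool :=
  ((x, y) \in zip s (rot 1 s)) || ((y, x) \in zip s (rot 1 s)).

Definition chordless_cycle (V : {fset nat}) (E : rel nat) : Prop :=
  exists s : seq nat,
    uniq s /\ 4 <= size s /\ (forall x, x \in V <-> x \in s) /\
    (forall x y, x \in V -> y \in V -> (E x y <-> cconsec s x y)).

Inductive gate : {fset nat} -> rel nat -> Prop :=
| gate_cycle V E : chordless_cycle V E -> gate V E
| gate_ext (V : {fset nat}) (E : rel nat) (C C' : {fset nat}) (p : seq nat)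
           (V' : {fset nat}) (E' : rel nat) :
    gate V E ->
    is_clique V E C -> is_clique V E C' ->
    (forall x, x \in C -> x \notin C') ->
    2 <= size p -> uniq p -> (forall x, x \in p -> x \notin V) ->
    (forall x, x \in V' <-> (x \in V \/ x \in p)) ->
    (forall x y, x \in V' -> y \in V' ->
       (E' x y <->
          [\/ (x \in V /\ y \in V /\ E x y),
              (x \in p /\ y \in p /\ consec p x y),
              (x = head 0 p /\ y \in C) \/ (y = head 0 p /\ x \in C) |
              (x = last 0 p /\ y \in C') \/ (y = last 0 p /\ x \in C')])) ->
    gate V' E'.

Definition kgate (k : nat) (V : {fset nat}) (E : rel nat) : Prop :=
  gate V E /\ num_cliques_eq V E k.

Definition acyclic (T : finType) (t : rel T) : Prop :=
  forall p : seq T, ~ (uniq p /\ 3 <= size p /\ cycle t p).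

Definition is_tree (T : finType) (t : rel T) : Prop :=
  symmetric t /\ irreflexive t /\ (forall x y, connect t x y) /\ acyclic t.

Definition degree (T : finType) (t : rel T) (x : T) : nat := #|[set y | t x y]|%N.

Definition max_degree (T : finType) (t : rel T) : nat := (\max_(x : T) degree t x)%N.

Definition is_star (T : finType) (t : rel T) : Prop :=
  exists c : T, forall x y, t x y <-> ((x = c /\ y <> c) \/ (y = c /\ x <> c)).

Definition is_subpath (T : finType) (t : rel T) (P : T * seq T) : Prop :=
  path t P.1 P.2 /\ uniq (P.1 :: P.2).

Definition path_edge (T : finType) (P : T * seq T) (a b : T) : bool :=
  ((a, b) \in zip (P.1 :: P.2) P.2) || ((b, a) \in zip (P.1 :: P.2) P.2).

Definition edges_meet (T : finType) (t : rel T) (P Q : T * seq T) : Prop :=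
  exists a b, t a b /\ path_edge P a b /\ path_edge Q a b.

Definition ept_rep (V : {fset nat}) (E : rel nat)
    (T : finType) (t : rel T) (P : nat -> T * seq T) : Prop :=
  is_tree t /\
  (forall v, v \in V -> is_subpath t (P v)) /\
  (forall u v, u \in V -> v \in V -> u != v -> (E u v <-> edges_meet t (P u) (P v))).

Definition helly_edges (V : {fset nat}) (T : finType) (t : rel T)
    (P : nat -> T * seq T) : Prop :=
  forall S : {fset nat}, (forall v, v \in S -> v \in V) -> S != fset0 ->
    (forall u v, u \in S -> v \in S -> edges_meet t (P u) (P v)) ->
    exists a b, t a b /\ (forall v, v \in S -> path_edge (P v) a b).

Definition helly_h22_rep (h : nat) (V : {fset nat}) (E : rel nat)
    (T : finType) (t : rel T) (P : nat -> T * seq T) : Prop :=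
  ept_rep V E t P /\ max_degree t = h /\ helly_edges V t P.

Definition in_helly_h22 (h : nat) (V : {fset nat}) (E : rel nat) : Prop :=
  exists (T : finType) (t : rel T) (P : nat -> T * seq T), helly_h22_rep h V E t P.

From mathcomp Require Import all_boot all_order.
From mathcomp Require Import finmap zify.
From Stdlib Require Import Classical.
Set Implicit Arguments. Unset Strict Implicit. Unset Printing Implicit Defensive.
Local Open Scope fset_scope.

(* In a gate the neighbourhood of every vertex v splits into two disjoint complete
   sets with no edge between them.  This holds on a chordless cycle and survives
   attaching a path to two disjoint cliques C, C': an old vertex of C gains the first
   path vertex on the side of its split that makes up C (similarly for C'), and a
   path vertex sees its two path neighbours, C standing in for the predecessor of
   the first one and C' for the successor of the last.  Consequently every clique
   through v is v plus one side, so v lies in at most two cliques.  Put one leaf per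
   clique on a star and send v to the path through the leaves of its cliques: two
   paths share an edge iff the vertices share a clique iff they are adjacent, and a
   pairwise intersecting family is a complete set, hence lies in one clique, whose
   leaf edge all the paths contain. *)

Section LocalSplitting.
Variables (V : {fset nat}) (E : rel nat).

Definition sym_on := forall x y, x \in V -> y \in V -> E x y -> E y x.

Record split_nbhd (v : nat) (A B : {fset nat}) : Prop := SplitNbhd {
  split_completeA : complete_set V E A;
  split_completeB : complete_set V E B;
  split_notinA : v \notin A;
  split_notinB : v \notin B;
  split_disjoint : forall x, x \in A -> x \notin B;
  split_nonadj : forall a b, a \in A -> b \in B -> ~~ E a b;
  split_nbhdE : forall x, x \in V -> x != v -> E v x <-> x \in A \/ x \in B }.

Definition locally_split :=
  sym_on /\ forall v, v \in V -> exists A B, split_nbhd v A B.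

Lemma split_nbhd_swap v A B : sym_on -> split_nbhd v A B -> split_nbhd v B A.
Proof.
move=> symE [cA cB vA vB dAB nAB nbE]; split => //.
- by move=> x xB; apply/negP => /dAB; rewrite xB.
- move=> a b aB bA; apply: contraNN (nAB b a bA aB).
  by apply: symE; [exact: (proj1 cB) | exact: (proj1 cA)].
- by move=> x xV xv; rewrite nbE //; tauto.
Qed.

Lemma complete_set_pair u v : sym_on -> u \in V -> v \in V -> E u v ->
  complete_set V E [fset u; v].
Proof.
move=> symE uV vV uv; split.
  by move=> x; rewrite !inE => /orP[] /eqP ->.
move=> x y; rewrite !inE => /orP[] /eqP -> /orP[] /eqP -> ne //.
- by rewrite eqxx in ne.
- exact: symE.
- by rewrite eqxx in ne.
Qed.

Lemma complete_set_sub_clique D : complete_set V E D ->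
  exists2 K, is_clique V E K & {subset D <= K}.
Proof.
move=> cD; have DV : D `<=` V by apply/fsubsetP => x /(proj1 cD).
move: {2}#|` V `\` D| (leqnn #|` V `\` D|) => n.
elim: n D cD DV => [|n IH] D cD DV hn.
  have /cardfs0_eq VD0 : #|` V `\` D| = 0 by lia.
  exists D => //; split=> // D1 cD1 sDD1.
  apply/fsetP => x; apply/idP/idP => [xD1|/sDD1//]; apply: contraT => xD.
  have : x \in V `\` D by rewrite inE xD (proj1 cD1 x xD1).
  by rewrite VD0 inE.
have [maxD|] := classic (forall D1, complete_set V E D1 -> {subset D <= D1} -> D1 = D).
  by exists D.
move=> /not_all_ex_not [D1 /not_all_ex_not [cD1 /not_all_ex_not [sDD1 neq]]].
have D1V : D1 `<=` V by apply/fsubsetP => x /(proj1 cD1).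
have ltD : #|` V `\` D1| < #|` V `\` D|.
  apply/fproper_ltn_card; rewrite fproperD2l // fproperEneq.
  by apply/andP; split; [apply/eqP => /esym /neq | apply/fsubsetP].
have [K cK sD1K] := IH D1 cD1 D1V ltac:(lia).
by exists K => // x /sDD1 /sD1K.
Qed.

Lemma sym_onE x y : sym_on -> x \in V -> y \in V -> E x y = E y x.
Proof. by move=> symE xV yV; apply/idP/idP; apply: symE. Qed.

Lemma complete_set1 x : x \in V -> complete_set V E [fset x].
Proof.
move=> xV; split=> [y | y z]; rewrite !inE; first by move/eqP ->.
by move=> /eqP -> /eqP ->; rewrite eqxx.
Qed.

Lemma complete_set_add v X : sym_on -> v \in V -> complete_set V E X ->
  (forall x, x \in X -> E v x) -> complete_set V E (v |` X).
Proof.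
move=> symE vV [XV cX] vX; split=> [x|x y]; rewrite !inE.
  by case/orP => [/eqP -> | /XV].
case/orP => [/eqP -> | xX] /orP [/eqP -> | yX] ne.
- by rewrite eqxx in ne.
- exact: vX.
- exact: symE _ _ vV (XV x xX) (vX x xX).
- exact: cX.
Qed.

Lemma split_nbhd_adjA v A B : split_nbhd v A B -> forall x, x \in A -> E v x.
Proof.
move=> sp x xA; have xV := proj1 (split_completeA sp) x xA.
apply/(split_nbhdE sp xV); last by left.
by apply: contraNneq (split_notinA sp) => <-.
Qed.

Lemma clique_through_split v A B K : sym_on -> split_nbhd v A B ->
  is_clique V E K -> v \in K -> K = v |` A \/ K = v |` B.
Proof.
move=> symE sp [[KV cK] maxK] vK; have vV := KV v vK.
have nbK x : x \in K -> x != v -> x \in A \/ x \in B.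
  by move=> xK xv; apply/(split_nbhdE sp (KV x xK) xv)/cK; rewrite // eq_sym.
have K_side X : complete_set V E X -> (forall x, x \in X -> E v x) ->
    {subset K `\ v <= X} -> K = v |` X.
  move=> cX vX KX; apply/esym/maxK; first exact: complete_set_add.
  by move=> x xK; rewrite !inE; case: eqVneq => //= xv; apply: KX; rewrite !inE xv.
have [KA|/fsubsetPn [x]] := boolP (K `\ v `<=` A).
  by left; apply: K_side (split_completeA sp) (split_nbhd_adjA sp) _; apply/fsubsetP.
rewrite !inE => /andP [xv xK] xA.
have xB : x \in B by case: (nbK x xK xv) => //; rewrite (negbTE xA).
right; apply: K_side (split_completeB sp) (split_nbhd_adjA (split_nbhd_swap symE sp)) _.
move=> y; rewrite !inE => /andP [yv yK].
case: (nbK y yK yv) => // yA.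
have yx : y != x by apply: contraNneq xA => <-.
by move: (split_nonadj sp yA xB); rewrite cK.
Qed.

End LocalSplitting.

Lemma mem_zip_nth (s t : seq nat) x y :
  reflect (exists2 i, i < minn (size s) (size t) & (nth 0 s i, nth 0 t i) = (x, y))
          ((x, y) \in zip s t).
Proof.
rewrite -size_zip; apply: (iffP (nthP (0, 0))) => -[i lt_i <-];
  by exists i; rewrite // nth_zip_cond lt_i.
Qed.

Lemma consec_sym s x y : consec s x y = consec s y x.
Proof. by rewrite /consec orbC. Qed.

Definition csucc n i := if i == n.-1 then 0 else i.+1.
Definition cpred n i := if i == 0 then n.-1 else i.-1.

Ltac cyclic_arith := rewrite /csucc /cpred; repeat case: ifP => /eqP; lia.

Lemma csucc_lt n i : i < n -> csucc n i < n.
Proof. by rewrite /csucc; case: eqP; lia. Qed.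

Section UniqIndices.
Variable s : seq nat.
Hypothesis uniq_s : uniq s.
Local Notation n := (size s).

Lemma nth_pair_inj a b c d : a < n -> b < n -> c < n -> d < n ->
  ((nth 0 s a, nth 0 s b) == (nth 0 s c, nth 0 s d)) = (a == c) && (b == d).
Proof. by move=> *; rewrite xpair_eqE !nth_uniq. Qed.

Lemma consec_nth i j : i < n -> j < n ->
  consec s (nth 0 s i) (nth 0 s j) = (j == i.+1) || (i == j.+1).
Proof.
have succ a b : a < n -> b < n -> ((nth 0 s a, nth 0 s b) \in zip s (behead s)) = (b == a.+1).
  move=> ltan ltbn; apply/mem_zip_nth/eqP => [[c]|eb]; last first.
    by exists a; rewrite ?size_behead ?nth_behead ?eb //; lia.
  by rewrite size_behead nth_behead => ltc /eqP; rewrite nth_pair_inj; lia.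
by move=> ltin ltjn; rewrite /consec !succ.
Qed.

Lemma nth_rot1 i : i < n -> nth 0 (rot 1 s) i = nth 0 s (csucc n i).
Proof.
rewrite /csucc; case: s => [//|x t] /= lt_i; rewrite rot1_cons nth_rcons.
have [lt_it | ge_it] := ltnP i (size t); first by rewrite ltn_eqF.
have -> : i = size t by lia.
by rewrite eqxx.
Qed.

Lemma cconsec_nth i j : i < n -> j < n ->
  cconsec s (nth 0 s i) (nth 0 s j) = (j == csucc n i) || (i == csucc n j).
Proof.
have succ a b : a < n -> b < n -> ((nth 0 s a, nth 0 s b) \in zip s (rot 1 s)) = (b == csucc n a).
  move=> ltan ltbn; apply/mem_zip_nth/eqP => [[c]|->]; last first.
    by exists a; rewrite ?size_rot ?nth_rot1 ?minnn.
  rewrite size_rot minnn => ltc; rewrite nth_rot1 // => /eqP.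
  by rewrite nth_pair_inj ?csucc_lt //; case/andP => /eqP <- /eqP <-.
by move=> ltin ltjn; rewrite /cconsec !succ.
Qed.

End UniqIndices.

Lemma chordless_cycle_locally_split V E : chordless_cycle V E -> locally_split V E.
Proof.
case=> s [uniq_s [ge4 [memV adjE]]].
have nthV j : j < size s -> nth 0 s j \in V by move=> lt_j; apply/memV/mem_nth.
split.
  move=> x y xV yV /(adjE x y xV yV) cxy; apply/(adjE y x yV xV).
  by rewrite /cconsec orbC.
move=> _ /memV /(nthP 0) [i lt_i <-].
set n := size s in ge4 lt_i nthV.
have [lt_p lt_s] : cpred n i < n /\ csucc n i < n by cyclic_arith.
have /and3P[ne_p ne_s ne_ps] : [&& cpred n i != i, csucc n i != i & cpred n i != csucc n i].
  by cyclic_arith.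
have nonadj : (csucc n i != csucc n (cpred n i)) && (cpred n i != csucc n (csucc n i)).
  by cyclic_arith.
have succ_pred j : j < n -> (i == csucc n j) = (j == cpred n i).
  by move=> lt_j; apply/eqP/eqP; cyclic_arith.
exists [fset nth 0 s (cpred n i)], [fset nth 0 s (csucc n i)].
have nth_eq := nth_uniq 0 _ _ uniq_s.
split.
- exact/complete_set1/nthV.
- exact/complete_set1/nthV.
- by rewrite inE nth_eq // eq_sym.
- by rewrite inE nth_eq // eq_sym.
- by move=> x; rewrite !inE => /eqP ->; rewrite nth_eq.
- move=> a b; rewrite !inE => /eqP -> /eqP ->.
  apply/negP => /(adjE _ _ (nthV _ lt_p) (nthV _ lt_s)).
  by rewrite cconsec_nth //; case/andP: nonadj => /negbTE -> /negbTE ->.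
- move=> _ /memV /(nthP 0) [j lt_j <-] _.
  by rewrite adjE ?nthV // cconsec_nth // !inE !nth_eq // succ_pred // orbC; split=> /orP.
Qed.

Section Supergraph.
Variables (V V' : {fset nat}) (E E' : rel nat).
Hypothesis sub_VV' : {subset V <= V'}.
Hypothesis E'_old : forall a b, a \in V -> b \in V -> E' a b = E a b.

Lemma complete_set_widen D : complete_set V E D -> complete_set V' E' D.
Proof.
case=> DV cD; split=> [x /DV /sub_VV' // | x y xD yD ne].
by rewrite E'_old ?DV //; exact: cD.
Qed.

Lemma split_nbhd_widen v A B : v \in V -> split_nbhd V E v A B ->
  (forall y, y \in V' -> y \notin V -> ~~ E' v y) -> split_nbhd V' E' v A B.
Proof.
move=> vV [cA cB vA vB dAB nAB nbE] old_only.
have AV := proj1 cA; have BV := proj1 cB.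
split=> //.
- exact: complete_set_widen.
- exact: complete_set_widen.
- by move=> a b aA bB; rewrite E'_old ?(AV a) ?(BV b) //; exact: nAB.
- move=> x xV' xv; have [xV | xV] := boolP (x \in V).
    by rewrite E'_old //; exact: nbE.
  have nA : x \notin A by apply: contra xV; apply: AV.
  have nB : x \notin B by apply: contra xV; apply: BV.
  by rewrite (negbTE (old_only x xV' xV)) (negbTE nA) (negbTE nB); split=> // -[].
Qed.

Lemma split_nbhd_add_neighbour v h A B : v \in V -> split_nbhd V E v A B ->
  sym_on V' E' -> h \in V' -> h \notin V ->
  (forall b, b \in V -> E' b h = (b \in v |` A)) ->
  (forall y, y \in V' -> y \notin V -> E' v y = (y == h)) ->
  split_nbhd V' E' v (h |` A) B.
Proof.
move=> vV [cA cB vA vB dAB nAB nbE] symE' hV' hV adj_h new_v.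
have AV := proj1 cA; have BV := proj1 cB.
have hB : h \notin B by apply: contra hV; apply: BV.
have hv : h != v by apply: contraNneq hV => ->.
split=> //.
- apply: (complete_set_add symE' hV' (complete_set_widen cA)) => a aA.
  have aV := AV a aA; have aV' := sub_VV' aV.
  by rewrite (sym_onE symE') // adj_h // !inE aA orbT.
- exact: complete_set_widen.
- by rewrite !inE negb_or eq_sym hv.
- by move=> x; rewrite !inE => /orP [/eqP -> // | /dAB].
- move=> a b; rewrite !inE => /orP [/eqP -> | aA] bB.
    have bV := BV b bB; have bV' := sub_VV' bV.
    have bv : b != v by apply: contraNneq vB => <-.
    rewrite (sym_onE symE') // adj_h // !inE negb_or bv /=.
    by apply: contraL bB; apply: dAB.
  by rewrite E'_old ?(AV a) ?(BV b) //; exact: nAB.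
- move=> x xV' xv; rewrite !inE; have [xV | xV] := boolP (x \in V).
    have xh : x != h by apply: contraNneq hV => <-.
    by rewrite E'_old // (negbTE xh); exact: nbE.
  have nA : x \notin A by apply: contra xV; apply: AV.
  have nB : x \notin B by apply: contra xV; apply: BV.
  rewrite new_v // (negbTE nA) (negbTE nB) orbF.
  by split=> [-> | [] //]; left.
Qed.

Lemma split_nbhd_add_clique_neighbour v K h : locally_split V E -> sym_on V' E' ->
  is_clique V E K -> v \in K -> h \in V' -> h \notin V ->
  (forall b, b \in V -> E' b h = (b \in K)) ->
  (forall y, y \in V' -> y \notin V -> E' v y = (y == h)) ->
  exists A B, split_nbhd V' E' v A B.
Proof.
move=> [symE splitV] symE' cK vK hV' hV adj_h new_v.
have vV : v \in V := proj1 (proj1 cK) v vK.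
have [A [B sp]] := splitV v vV.
case: (clique_through_split symE sp cK vK) => eK.
  by exists (h |` A), B; apply: split_nbhd_add_neighbour => //; rewrite -eK.
exists (h |` B), A; apply: (split_nbhd_add_neighbour vV (split_nbhd_swap symE sp)) => //.
by rewrite -eK.
Qed.

End Supergraph.

Section AttachPath.
Variables (V : {fset nat}) (E : rel nat) (C C' : {fset nat}) (p : seq nat).
Variables (V' : {fset nat}) (E' : rel nat).
Hypothesis splitVE : locally_split V E.
Hypothesis cliqueC : is_clique V E C.
Hypothesis cliqueC' : is_clique V E C'.
Hypothesis disjCC' : forall x, x \in C -> x \notin C'.
Hypothesis size_p : 2 <= size p.
Hypothesis uniq_p : uniq p.
Hypothesis fresh_p : forall x, x \in p -> x \notin V.
Hypothesis V'E : forall x, x \in V' <-> (x \in V \/ x \in p).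
Hypothesis E'E : forall x y, x \in V' -> y \in V' ->
  (E' x y <->
     [\/ (x \in V /\ y \in V /\ E x y),
         (x \in p /\ y \in p /\ consec p x y),
         (x = head 0 p /\ y \in C) \/ (y = head 0 p /\ x \in C) |
         (x = last 0 p /\ y \in C') \/ (y = last 0 p /\ x \in C')]).

Local Notation n := (size p).
Local Notation q j := (nth 0 p j).
Local Notation h0 := (head 0 p).
Local Notation hl := (last 0 p).

Let sub_VV' : {subset V <= V'}. Proof. by move=> x xV; apply/V'E; left. Qed.
Let sub_pV' : {subset p <= V'}. Proof. by move=> x xp; apply/V'E; right. Qed.
Let CV : {subset C <= V}. Proof. exact: (proj1 (proj1 cliqueC)). Qed.
Let C'V : {subset C' <= V}. Proof. exact: (proj1 (proj1 cliqueC')). Qed.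

Let notin_p x : x \in V -> x \notin p.
Proof. by move=> xV; apply: contraL xV; apply: fresh_p. Qed.

Lemma attach_adjE x y : x \in V' -> y \in V' -> E' x y =
  [|| [&& x \in V, y \in V & E x y], [&& x \in p, y \in p & consec p x y],
      (x == h0) && (y \in C) || (y == h0) && (x \in C)
    | (x == hl) && (y \in C') || (y == hl) && (x \in C')].
Proof.
move=> xV' yV'; apply/idP/idP => [/(E'E xV' yV') | ].
  by case=> [[-> [-> ->]] | [-> [-> ->]] | [] [-> ->] | [] [-> ->]]; rewrite ?eqxx ?orbT.
move=> adj; apply/(E'E xV' yV').
case/or4P: adj => [/and3P[? ? ?] | /and3P[? ? ?] | /orP[] /andP[/eqP ? ?] | /orP[] /andP[/eqP ? ?]];
  [apply: Or41 | apply: Or42 | apply: Or43 | apply: Or43 | apply: Or44 | apply: Or44]; tauto.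
Qed.

Let n_gt0 : 0 < n. Proof. lia. Qed.
Let last_lt : n.-1 < n. Proof. lia. Qed.
Let q_p j : j < n -> q j \in p. Proof. exact: mem_nth. Qed.
Let q_V' j : j < n -> q j \in V'. Proof. by move/q_p/sub_pV'. Qed.
Let h0_p : h0 \in p. Proof. by rewrite -nth0 q_p. Qed.
Let hl_p : hl \in p. Proof. by rewrite -nth_last q_p. Qed.

Let q_eq_h0 j : j < n -> (q j == h0) = (j == 0).
Proof. by move=> lt_j; rewrite -nth0 nth_uniq. Qed.

Let q_eq_hl j : j < n -> (q j == hl) = (j == n.-1).
Proof. by move=> lt_j; rewrite -nth_last nth_uniq. Qed.

Let h0_neq_hl : (h0 == hl) = false.
Proof. by rewrite -nth0 q_eq_hl //; lia. Qed.

Let V_neq_h0 x : x \in V -> (x == h0) = false.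
Proof. by move=> xV; apply: contraNF (notin_p xV) => /eqP ->. Qed.

Let V_neq_hl x : x \in V -> (x == hl) = false.
Proof. by move=> xV; apply: contraNF (notin_p xV) => /eqP ->. Qed.

Let p_notin_C x : x \in p -> (x \in C) = false.
Proof. by move=> xp; apply: contraNF (fresh_p xp); apply: CV. Qed.

Let p_notin_C' x : x \in p -> (x \in C') = false.
Proof. by move=> xp; apply: contraNF (fresh_p xp); apply: C'V. Qed.

Lemma attach_adj_old a b : a \in V -> b \in V -> E' a b = E a b.
Proof.
move=> aV bV; rewrite attach_adjE ?(sub_VV' aV) ?(sub_VV' bV) // aV bV (negbTE (notin_p aV)).
by rewrite !V_neq_h0 ?V_neq_hl //= !orbF.
Qed.

Lemma attach_adj_link x y : x \in V -> y \in p ->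
  E' x y = (y == h0) && (x \in C) || (y == hl) && (x \in C').
Proof.
move=> xV yp; rewrite attach_adjE ?(sub_VV' xV) ?(sub_pV' yp) // (negbTE (fresh_p yp)).
by rewrite (negbTE (notin_p xV)) (V_neq_h0 xV) (V_neq_hl xV) /= andbF.
Qed.

Lemma attach_adj_path x y : x \in p -> y \in p -> E' x y = consec p x y.
Proof.
move=> xp yp; rewrite attach_adjE ?(sub_pV' xp) ?(sub_pV' yp) // (negbTE (fresh_p xp)) xp yp /=.
by rewrite !p_notin_C ?p_notin_C' // !andbF !orbF.
Qed.

Lemma attach_sym : sym_on V' E'.
Proof.
move=> x y xV' yV'; rewrite !attach_adjE //.
case/or4P => [/and3P [xV yV exy] | /and3P [xp yp cxy] | adj | adj].
- by rewrite xV yV (proj1 splitVE _ _ xV yV exy).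
- by rewrite xp yp consec_sym cxy orbT.
- by rewrite (orbC ((y == h0) && _)) adj !orbT.
- by rewrite (orbC ((y == hl) && _)) adj !orbT.
Qed.

Lemma attach_split_old v : v \in V -> exists A B, split_nbhd V' E' v A B.
Proof.
move=> vV.
have new_p y : y \in V' -> y \notin V -> y \in p by case/V'E => // yV; rewrite yV.
have new_adj y : y \in V' -> y \notin V ->
    E' v y = (y == h0) && (v \in C) || (y == hl) && (v \in C').
  by move=> yV' yV; rewrite attach_adj_link ?new_p.
have [vC | vC] := boolP (v \in C).
  apply: (split_nbhd_add_clique_neighbour (h := h0) sub_VV' attach_adj_old splitVE attach_sym
            cliqueC vC).
  - exact: sub_pV'.
  - exact: fresh_p.
  - by move=> b bV; rewrite attach_adj_link // eqxx h0_neq_hl /= orbF.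
  - by move=> y yV' yV; rewrite new_adj // vC (negbTE (disjCC' vC)) andbT andbF orbF.
have [vC' | vC'] := boolP (v \in C').
  apply: (split_nbhd_add_clique_neighbour (h := hl) sub_VV' attach_adj_old splitVE attach_sym
            cliqueC' vC').
  - exact: sub_pV'.
  - exact: fresh_p.
  - by move=> b bV; rewrite attach_adj_link // eqxx eq_sym h0_neq_hl.
  - by move=> y yV' yV; rewrite new_adj // (negbTE vC) vC' andbT andbF.
have [A [B sp]] := proj2 splitVE v vV.
exists A, B; apply: (split_nbhd_widen sub_VV' attach_adj_old vV sp) => y yV' yV.
by rewrite new_adj // (negbTE vC) (negbTE vC') !andbF.
Qed.

Let lt_pred i : i < n -> i.-1 < n.
Proof. lia. Qed.

Let lt_succ i : i < n -> i != n.-1 -> i.+1 < n.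
Proof. lia. Qed.

Let before i := if i == 0 then C else [fset q i.-1].
Let after i := if i == n.-1 then C' else [fset q i.+1].

Let V_in_before x i : i < n -> x \in V -> (x \in before i) = (i == 0) && (x \in C).
Proof.
move=> lt_i xV; rewrite /before; case: eqP => //= _; rewrite inE.
by apply: contraNF (notin_p xV) => /eqP ->; apply/q_p/lt_pred.
Qed.

Let V_in_after x i : i < n -> x \in V -> (x \in after i) = (i == n.-1) && (x \in C').
Proof.
move=> lt_i xV; rewrite /after; case: eqP => //= /eqP ne; rewrite inE.
by apply: contraNF (notin_p xV) => /eqP ->; apply/q_p/lt_succ.
Qed.

Let q_in_before i j : i < n -> j < n -> (q j \in before i) = (i != 0) && (j == i.-1).
Proof.
move=> lt_i lt_j; rewrite /before; case: eqP => /= [_ | _]; first by rewrite p_notin_C ?q_p.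
by rewrite inE nth_uniq ?lt_pred.
Qed.

Let q_in_after i j : i < n -> j < n -> (q j \in after i) = (i != n.-1) && (j == i.+1).
Proof.
move=> lt_i lt_j; rewrite /after; case: eqP => /= [_ | /eqP ne]; first by rewrite p_notin_C' ?q_p.
by rewrite inE nth_uniq ?lt_succ.
Qed.

Let V'_cases x : x \in V' -> x \in V \/ exists2 j, j < n & x = q j.
Proof. by case/V'E => [|/(nthP 0) [j lt_j <-]]; [left | right; exists j]. Qed.

Lemma attach_split_path i : i < n -> split_nbhd V' E' (q i) (before i) (after i).
Proof.
move=> lt_i.
have cb : complete_set V' E' (before i).
  rewrite /before; case: eqP => _; last exact/complete_set1/q_V'/lt_pred.
  exact: complete_set_widen sub_VV' attach_adj_old _ (proj1 cliqueC).
have ca : complete_set V' E' (after i).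
  rewrite /after; case: eqP => /eqP ne; last exact/complete_set1/q_V'/lt_succ.
  exact: complete_set_widen sub_VV' attach_adj_old _ (proj1 cliqueC').
split=> //.
- by rewrite q_in_before //; lia.
- by rewrite q_in_after //; lia.
- move=> x xb; case/V'_cases: (proj1 cb x xb) => [xV | [j lt_j ?]]; subst; move: xb.
    by rewrite V_in_before // V_in_after // => /andP [_ /disjCC' /negbTE ->]; rewrite andbF.
  by rewrite q_in_before // q_in_after //; lia.
- move=> a b ab bb.
  case/V'_cases: (proj1 cb a ab) => [aV | [j lt_j ?]];
    case/V'_cases: (proj1 ca b bb) => [bV | [l lt_l ?]]; subst; move: ab bb.
  + by rewrite V_in_before // V_in_after //; lia.
  + rewrite V_in_before // q_in_after // => /andP [_ aC].
    by rewrite attach_adj_link ?q_p // q_eq_h0 // q_eq_hl // (negbTE (disjCC' aC)) andbF orbF; lia.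
  + rewrite q_in_before // V_in_after // => ab /andP [_ bC'].
    have bC : b \notin C by apply: contraL bC'; apply: disjCC'.
    rewrite (sym_onE attach_sym) ?q_V' ?sub_VV' // attach_adj_link ?q_p // q_eq_h0 // q_eq_hl //.
    by rewrite (negbTE bC) andbF /=; lia.
  + by rewrite q_in_before // q_in_after // attach_adj_path ?q_p // consec_nth //; lia.
- move=> x /V'_cases [xV | [j lt_j ->]] _.
    rewrite (sym_onE attach_sym) ?q_V' ?sub_VV' // attach_adj_link ?q_p // q_eq_h0 // q_eq_hl //.
    by rewrite V_in_before // V_in_after //; split=> /orP.
  by rewrite attach_adj_path ?q_p // consec_nth // q_in_before // q_in_after //; lia.
Qed.

Lemma attach_locally_split : locally_split V' E'.
Proof.
split=> [|v /V'_cases [vV | [i lt_i ->]]]; first exact: attach_sym.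
  exact: attach_split_old.
by exists (before i), (after i); apply: attach_split_path.
Qed.

End AttachPath.

Lemma gate_locally_split V E : gate V E -> locally_split V E.
Proof.
elim=> [{}V {}E | {}V {}E C C' p V' E' _ IH cC cC' dCC' ge2 up fresh V'E E'E].
  exact: chordless_cycle_locally_split.
exact: attach_locally_split IH cC cC' dCC' ge2 up fresh V'E E'E.
Qed.

Section Star.
Variable k : nat.

Definition star_vertex := 'I_k.+1.
Definition centre : star_vertex := ord0.
Definition leaf (i : nat) : star_vertex := inord i.+1.
Definition star_rel : rel star_vertex := fun x y => (x == centre) != (y == centre).

Lemma leaf_neq_centre i : i < k -> (leaf i == centre) = false.
Proof. by move=> lt_i; apply/negbTE/eqP => /(congr1 val); rewrite /= inordK. Qed.

Lemma leaf_inj i j : i < k -> j < k -> leaf i = leaf j -> i = j.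
Proof. by move=> lt_i lt_j /(congr1 val); rewrite /= !inordK // => -[]. Qed.

Lemma star_rel_centre_leaf i : i < k -> star_rel centre (leaf i).
Proof. by move=> lt_i; rewrite /star_rel eqxx leaf_neq_centre. Qed.

Lemma star_relC x y : star_rel x y = star_rel y x.
Proof. by rewrite /star_rel eq_sym. Qed.

Lemma star_rel_centre x y : star_rel x y -> x = centre \/ y = centre.
Proof. by rewrite /star_rel; case: (x =P centre) => [|_]; case: (y =P centre); auto. Qed.

Lemma star_rel2_centre x y z : star_rel x y -> star_rel y z -> (x == centre) = (z == centre).
Proof. by rewrite /star_rel; case: (x == centre); case: (y == centre); case: (z == centre). Qed.

Lemma star_acyclic : acyclic star_rel.
Proof.
(* Of three consecutive cycle vertices the outer two lie on the same side, hence are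
   leaves, so the middle one is the centre; then so is the vertex after the next. *)
move=> [|a [|b [|d r]]] [uniq_p [_ cyc]] //.
have [ab bd de] : [/\ star_rel a b, star_rel b d & star_rel d (head a r)].
  by move: cyc; rewrite /cycle /=; case: (r) => [|e t] /= /and3P [-> -> /andP []].
have eb : head a r != b.
  have hr : head a r \in a :: r by case: (r) => [|e t]; rewrite /= !inE eqxx ?orbT.
  apply: contraTneq hr => ->; move: uniq_p; rewrite /= !inE.
  by case/and4P => /norP [nab _] /norP [_ nbr] _ _; rewrite negb_or eq_sym nab nbr.
have ad : a != d by move: uniq_p; rewrite /= !inE => /andP [/norP [_ /norP []]].
have a_leaf : a != centre.
  apply: contraNneq ad => ac; move: (star_rel2_centre ab bd); rewrite ac eqxx.
  by move/esym/eqP ->.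
have b_centre : b = centre.
  by apply/eqP; move: ab; rewrite /star_rel (negbTE a_leaf); case: (b == centre).
by move: eb (star_rel2_centre bd de); rewrite b_centre eqxx => /negbTE ->.
Qed.

Lemma star_tree : is_tree star_rel.
Proof.
split; first exact: star_relC.
split; first by move=> x; rewrite /star_rel eqxx.
split; last exact: star_acyclic.
have to_centre x : connect star_rel x centre.
  have [-> | xc] := eqVneq x centre; first exact: connect0.
  by apply: connect1; rewrite /star_rel (negbTE xc) eqxx.
move=> x y; apply: connect_trans (to_centre x) _.
by rewrite (sym_connect_sym star_relC).
Qed.

Lemma star_is_star : is_star star_rel.
Proof.
exists centre => x y; rewrite /star_rel.
by case: (x =P centre); case: (y =P centre); intuition.
Qed.

Lemma star_max_degree : max_degree star_rel = k.
Proof.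
have deg_centre : degree star_rel centre = k.
  rewrite /degree; have -> : [set y | star_rel centre y] = [set~ centre].
    by apply/setP => y; rewrite !inE /star_rel eqxx.
  by rewrite cardsC1 card_ord.
have deg_leaf x : x != centre -> degree star_rel x = 1.
  move=> xc; rewrite /degree; have -> : [set y | star_rel x y] = [set centre].
    by apply/setP => y; rewrite !inE /star_rel (negbTE xc); case: (y == centre).
  by rewrite cards1.
apply/anti_leq/andP; split; last by rewrite -{1}deg_centre; apply: leq_bigmax.
apply/bigmax_leqP => x _; have [-> | xc] := eqVneq x centre; first by rewrite deg_centre.
by rewrite deg_leaf //; case: x xc => [[|m] lt_m] //= _; lia.
Qed.

End Star.

Arguments star_rel : clear implicits.

Lemma path_edgeC (T : finType) (P : T * seq T) a b : path_edge P a b = path_edge P b a.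
Proof. by rewrite /path_edge orbC. Qed.

Section StarRepresentation.
Variables (k : nat) (V : {fset nat}) (E : rel nat) (cs : seq {fset nat}).
Hypothesis splitVE : locally_split V E.
Hypothesis uniq_cs : uniq cs.
Hypothesis size_cs : size cs = k.
Hypothesis cliques_cs : forall C, is_clique V E C <-> C \in cs.

Definition clique_indices v := [seq i <- iota 0 k | v \in nth fset0 cs i].

(* Vertices of V lie in one or two cliques; the empty case is junk. *)
Definition star_path v : star_vertex k * seq (star_vertex k) :=
  match clique_indices v with
  | [::] => (centre k, [::])
  | [:: i] => (leaf k i, [:: centre k])
  | i :: j :: _ => (leaf k i, [:: centre k; leaf k j])
  end.

Lemma mem_clique_indices v i : (i \in clique_indices v) = (i < k) && (v \in nth fset0 cs i).
Proof. by rewrite mem_filter mem_iota add0n andbC. Qed.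

Lemma uniq_clique_indices v : uniq (clique_indices v).
Proof. exact/filter_uniq/iota_uniq. Qed.

Lemma clique_indices_lt v i : i \in clique_indices v -> i < k.
Proof. by rewrite mem_clique_indices => /andP []. Qed.

Lemma is_clique_nth i : i < k -> is_clique V E (nth fset0 cs i).
Proof. by move=> lt_i; apply/cliques_cs/mem_nth; rewrite size_cs. Qed.

Lemma is_cliqueP K : is_clique V E K -> exists2 i, i < k & nth fset0 cs i = K.
Proof.
by move/cliques_cs => Kcs; exists (index K cs); rewrite ?nth_index // -size_cs index_mem.
Qed.

Lemma complete_set_in_clique D : complete_set V E D ->
  exists2 i, i < k & forall v, v \in D -> i \in clique_indices v.
Proof.
case/complete_set_sub_clique => K /is_cliqueP [i lt_i <-] DK.
by exists i => // v /DK vK; rewrite mem_clique_indices lt_i.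
Qed.

Lemma clique_indices_nonempty v : v \in V -> exists i, i \in clique_indices v.
Proof.
move=> vV; have [i _ /(_ v)] := complete_set_in_clique (complete_set1 E vV).
by rewrite inE eqxx => /(_ isT); exists i.
Qed.

Lemma size_clique_indices v : v \in V -> size (clique_indices v) <= 2.
Proof.
move=> vV; have [symE splitV] := splitVE; have [A [B sp]] := splitV v vV.
rewrite -(size_map (nth fset0 cs)) -[2]/(size [:: v |` A; v |` B]).
apply: uniq_leq_size.
  rewrite map_inj_in_uniq ?uniq_clique_indices // => i j.
  rewrite !mem_clique_indices => /andP [lt_i _] /andP [lt_j _] /eqP.
  by rewrite nth_uniq ?size_cs // => /eqP.
move=> K /mapP [i]; rewrite mem_clique_indices => /andP [lt_i vK] ->.
by case: (clique_through_split symE sp (is_clique_nth lt_i) vK) => ->; rewrite !inE eqxx ?orbT.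
Qed.

Lemma path_edge_star_path v x : v \in V ->
  path_edge (star_path v) (centre k) x = (x \in map (leaf k) (clique_indices v)).
Proof.
move=> vV; have := size_clique_indices vV; have [i0 i0v] := clique_indices_nonempty vV.
have cl i : i \in clique_indices v -> (centre k == leaf k i) = false.
  by move/clique_indices_lt => lt_i; rewrite eq_sym leaf_neq_centre.
rewrite /star_path; move: i0v cl; case: (clique_indices v) => [|i [|j [|? ?]]] //= _ cl _.
  by rewrite /path_edge /= !inE !xpair_eqE eqxx cl ?inE ?eqxx // andbT.
rewrite /path_edge /= !inE !xpair_eqE eqxx !cl ?inE ?eqxx ?orbT //=.
by rewrite andbT andbF orbF orbC.
Qed.

Lemma star_path_subpath v : v \in V -> is_subpath (star_rel k) (star_path v).
Proof.
move=> vV; have := size_clique_indices vV; have [i0 i0v] := clique_indices_nonempty vV.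
have := @clique_indices_lt v; have := uniq_clique_indices v.
rewrite /star_path /is_subpath; move: i0v; case: (clique_indices v) => [|i [|j [|? ?]]] //= _.
  move=> _ lt _; have lt_i := lt i (mem_head _ _).
  by rewrite star_relC star_rel_centre_leaf // !inE (leaf_neq_centre lt_i).
rewrite !inE => /andP [ij _] lt _.
have lt_i := lt i (mem_head _ _); have lt_j : j < k by apply: lt; rewrite !inE eqxx orbT.
rewrite star_relC !star_rel_centre_leaf // (leaf_neq_centre lt_i).
rewrite (eq_sym (centre k)) (leaf_neq_centre lt_j) /=.
by split=> //; rewrite andbT; apply: contra ij => /eqP /(leaf_inj lt_i lt_j) ->.
Qed.

Lemma edges_meet_star_path u v : u \in V -> v \in V ->
  edges_meet (star_rel k) (star_path u) (star_path v) <->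
  exists i, i \in clique_indices u /\ i \in clique_indices v.
Proof.
move=> uV vV; split=> [[a [b [ab [eu ev]]]] | [i [iu iv]]]; last first.
  exists (centre k), (leaf k i); split; first exact/star_rel_centre_leaf/(clique_indices_lt iu).
  by rewrite !path_edge_star_path // !map_f.
have [x xu xv] : exists2 x, path_edge (star_path u) (centre k) x
                          & path_edge (star_path v) (centre k) x.
  case: (star_rel_centre ab) => ec; first by exists b; rewrite -ec.
  by exists a; rewrite !(path_edgeC _ (centre k)) -ec.
move: xu xv; rewrite !path_edge_star_path // => /mapP [i iu ->] /mapP [j jv].
move/(leaf_inj (clique_indices_lt iu) (clique_indices_lt jv)) => eij.
by exists i; split; rewrite // eij.
Qed.

Lemma adj_share_clique u v : u \in V -> v \in V -> u != v ->
  E u v <-> exists i, i \in clique_indices u /\ i \in clique_indices v.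
Proof.
move=> uV vV uv; split=> [euv | [i []]].
  have [i _ Di] := complete_set_in_clique (complete_set_pair (proj1 splitVE) uV vV euv).
  by exists i; split; apply: Di; rewrite !inE eqxx ?orbT.
rewrite !mem_clique_indices => /andP [lt_i ui] /andP [_ vi].
by case: (is_clique_nth lt_i) => [[_ cK] _]; apply: cK.
Qed.

Lemma star_path_helly : helly_edges V (star_rel k) star_path.
Proof.
move=> S SV _ meet.
have cS : complete_set V E S.
  split=> // x y xS yS xy; have [xV yV] := (SV x xS, SV y yS).
  by apply/(adj_share_clique xV yV xy)/edges_meet_star_path/meet.
have [i lt_i Si] := complete_set_in_clique cS.
exists (centre k), (leaf k i); split; first exact: star_rel_centre_leaf.
by move=> v vS; rewrite path_edge_star_path ?SV // map_f ?Si.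
Qed.

Lemma star_representation : helly_h22_rep k V E (star_rel k) star_path.
Proof.
split; last split.
- split; [exact: star_tree | split; first exact: star_path_subpath].
  by move=> u v uV vV uv; rewrite adj_share_clique // edges_meet_star_path.
- exact: star_max_degree.
- exact: star_path_helly.
Qed.

End StarRepresentation.

Theorem lemma4 (k : nat) (V : {fset nat}) (E : rel nat) :
  kgate k V E ->
  in_helly_h22 k V E /\
  exists (T : finType) (t : rel T) (P : nat -> T * seq T),
    helly_h22_rep k V E t P /\ is_star t.
Proof.
case=> /gate_locally_split splitVE [cs [uniq_cs [size_cs cliques_cs]]].
have rep := star_representation splitVE uniq_cs size_cs cliques_cs.
split; first by exists (star_vertex k), (star_rel k), (star_path k cs).
by exists (star_vertex k), (star_rel k), (star_path k cs); split; last exact: star_is_star.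
Qed.
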